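(* Let $h$ be a Hermitian $2\times2$ matrix with eigenvalues $\varepsilon_0<\varepsilon_1$, and set $H_A=H_B=h$. Let $\rho=(\rho_{ij})$ be a two-qubit density matrix (basis $|00\rangle,|01\rangle,|10\rangle,|11\rangle$). (i) Let $\mu_1\le\mu_2\le\mu_3\le\mu_4$ be the diagonal entries $\rho_{11},\dots,\rho_{44}$ in ascending order and let $P$ be a permutation matrix such that $P\rho P^\dagger$ has diagonal $(\mu_4,\mu_3,\mu_2,\mu_1)$. Then $Sub_{ic}(P\rho P^\dagger)\ge Sub_{ic}(\rho)$. (ii) Let $U$ be any $4\times4$ unitary, $\tilde\rho=U\rho U^\dagger$, let $\lambda_1^A,\lambda_1^B$ be the largest eigenvalues of $\rho_A,\rho_B$, and let $\xi_1^A,\xi_1^B$ be the largest eigenvalues of $\tilde\tau_A,\tilde\tau_B$, the reduced states of the dephased state $\tilde\tau=\mathrm{diag}(\tilde\rho_{11},\tilde\rho_{22},\tilde\rho_{33},\tilde\rho_{44})$ (equivalently, the largest diagonal entries of $\tilde\rho_A,\tilde\rho_B$). If $\xi_1^A+\xi_1^B>\lambda_1^A+\lambda_1^B$, then $Sub(\tilde\rho)>Sub(\rho)$.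
   Context: Quantum battery capacity: for Hermitian $H$ on $\mathbb{C}^d$ with eigenvalues $\epsilon_0\le\dots\le\epsilon_{d-1}$ and density matrix $\rho$ with eigenvalues $\lambda_0\le\dots\le\lambda_{d-1}$, $\mathcal{C}(\rho;H)=\sum_i\epsilon_i(\lambda_i-\lambda_{d-1-i})$. For a two-qubit state $\rho$ with reduced states $\rho_A,\rho_B$: $Sub(\rho)=\mathcal{C}(\rho_A;H_A)+\mathcal{C}(\rho_B;H_B)$; the dephased state is $\tau=\mathrm{diag}(\rho_{11},\rho_{22},\rho_{33},\rho_{44})$ in the computational basis, and $Sub_{ic}(\rho)=\mathcal{C}(\tau_A;H_A)+\mathcal{C}(\tau_B;H_B)$ where $\tau_A,\tau_B$ are the reduced states of $\tau$. *)

From HB Require Import structures.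
From mathcomp Require Import all_boot all_order all_algebra.
From mathcomp Require Import algC sesquilinear spectral.
Set Implicit Arguments. Unset Strict Implicit. Unset Printing Implicit Defensive.
Import Order.TTheory GRing.Theory Num.Theory.
Local Open Scope ring_scope.

(* The complex scalars are an arbitrary numClosedFieldType C (e.g. the
   complex numbers R[i] over a real closed field / realType R, or algC):
   an algebraically closed field with conjugation and the standard partial
   order x <= y iff y - x is real and nonnegative. *)

Definition dag {C : numClosedFieldType} m n (A : 'M[C]_(m, n)) : 'M[C]_(n, m) := (A ^t* )%sesqui.

Definition density {C : numClosedFieldType} n (rho : 'M[C]_n) : Prop :=
  [/\ rho \is hermsymmx,
      (forall v : 'rV[C]_n, 0 <= (v *m rho *m dag v) 0 0)
    & \tr rho = 1].

Definition roots_of {C : numClosedFieldType} (p : {poly C}) : seq C := sval (closed_field_poly_normal p).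

(* The eigenvalues of a square matrix, with multiplicity (roots of the
   characteristic polynomial), listed in ascending order.  For Hermitian
   matrices they are real, so the order is total on them. *)
Definition spec {C : numClosedFieldType} n (A : 'M[C]_n) : seq C :=
  sort (fun x y : C => x <= y) (roots_of (char_poly A)).

Definition eig {C : numClosedFieldType} n (A : 'M[C]_n) (i : nat) : C := nth 0 (spec A) i.

Definition max_eig {C : numClosedFieldType} n (A : 'M[C]_n) : C := eig A n.-1.

Definition capacity {C : numClosedFieldType} d (rho H : 'M[C]_d) : C :=
  \sum_(i < d) eig H i * (eig rho i - eig rho (d.-1 - i)%N).

(* Two-qubit indexing: |ab> <-> index 2a+b, i.e. basis |00>,|01>,|10>,|11> *)
Definition idx2 (a b : 'I_2) : 'I_4 := inord (2 * a + b).

Definition ptraceB {C : numClosedFieldType} (rho : 'M[C]_4) : 'M[C]_2 :=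
  \matrix_(a < 2, a' < 2) \sum_(b < 2) rho (idx2 a b) (idx2 a' b).
Definition ptraceA {C : numClosedFieldType} (rho : 'M[C]_4) : 'M[C]_2 :=
  \matrix_(b < 2, b' < 2) \sum_(a < 2) rho (idx2 a b) (idx2 a b').

Definition redA {C : numClosedFieldType} (rho : 'M[C]_4) : 'M[C]_2 := ptraceB rho.
Definition redB {C : numClosedFieldType} (rho : 'M[C]_4) : 'M[C]_2 := ptraceA rho.

Definition dephase {C : numClosedFieldType} (rho : 'M[C]_4) : 'M[C]_4 :=
  diag_mx (\row_i rho i i).

Definition Sub_erg {C : numClosedFieldType} (HA HB : 'M[C]_2) (rho : 'M[C]_4) : C :=
  capacity (redA rho) HA + capacity (redB rho) HB.

Definition Sub_ic {C : numClosedFieldType} (HA HB : 'M[C]_2) (rho : 'M[C]_4) : C :=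
  capacity (redA (dephase rho)) HA + capacity (redB (dephase rho)) HB.

From HB Require Import structures.
From mathcomp Require Import all_boot all_order fingroup perm all_algebra.
From mathcomp Require Import sesquilinear spectral ring.
Import Order.TTheory GRing.Theory Num.Theory.
Local Open Scope ring_scope.

(* For a qubit state X with spectrum l0 <= l1 the capacity is (e1 - e0) (l1 - l0)
   = (e1 - e0) (2 l1 - tr X), so both Sub and Sub_ic are increasing functions of the
   sum of the largest eigenvalues of the two marginals.  The largest eigenvalue of a
   Hermitian 2x2 matrix dominates its diagonal entries, and for a diagonal matrix it
   is one of them.  Hence dephasing can only lower that sum, which gives (ii).  For a
   dephased state the sum equals tr rho + rho_ii - rho_jj for some i, j, so it is at
   most tr rho + (max diagonal - min diagonal); the permutation sorting the diagonal
   in decreasing order attains this bound, which gives (i). *)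

Set Implicit Arguments.
Unset Strict Implicit.
Unset Printing Implicit Defensive.

Lemma le0_of_mul_ge0_add_le0 (R : numDomainType) (x y : R) :
  x \is Num.real -> 0 <= x * y -> x + y <= 0 -> x <= 0.
Proof.
move=> real_x xy_ge0 sum_le0; rewrite real_leNgt //; apply/negP => x_gt0.
have le_x_sum : x <= x + y by rewrite lerDl -(pmulr_rge0 _ x_gt0).
by have := lt_le_trans (lt_le_trans x_gt0 le_x_sum) sum_le0; rewrite ltxx.
Qed.

Lemma sorted4_bounds disp (T : porderType disp) (x0 x1 x2 x3 x : T) :
  sorted <=%O [:: x0; x1; x2; x3] -> x \in [:: x0; x1; x2; x3] -> (x0 <= x <= x3)%O.
Proof.
move=> /and4P[le01 le12 le23 _]; have le02 := le_trans le01 le12.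
have le13 := le_trans le12 le23; have le03 := le_trans le02 le23.
by rewrite !inE => /or4P[] /eqP->; rewrite ?lexx ?le01 ?le02 ?le03 ?le12 ?le13 ?le23.
Qed.

Section QubitMatrices.
Variable C : numClosedFieldType.

Lemma hermsymmxP n (M : 'M[C]_n) :
  reflect (forall i j, M j i = (M i j)^*) (M \is hermsymmx).
Proof.
rewrite is_hermitianmxE expr0 scale1r; apply: (iffP eqP) => [eM i j | eM].
  by rewrite [in LHS]eM !mxE.
by apply/matrixP => i j; rewrite !mxE eM.
Qed.

Lemma hermsymmx_diag_real n (M : 'M[C]_n) i : M \is hermsymmx -> M i i \is Num.real.
Proof. by move/hermsymmxP => eM; rewrite CrealE -eM. Qed.

Lemma hermsymmx_congruence m n (U : 'M[C]_(m, n)) (M : 'M[C]_n) :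
  M \is hermsymmx -> U *m M *m dag U \is hermsymmx.
Proof.
rewrite !is_hermitianmxE expr0 !scale1r /dag => /eqP eM; apply/eqP.
by rewrite !trmx_mul !map_mxM trmxCK -eM mulmxA.
Qed.

Lemma mxtrace_unitary_conj n (U M : 'M[C]_n) :
  U \is unitarymx -> \tr (U *m M *m dag U) = \tr M.
Proof. by move=> /eqP eU; rewrite mxtrace_mulC mulmxA (mulmx1C eU) mul1mx. Qed.

Lemma perm_mx_unitary n (s : 'S_n) : (perm_mx s : 'M[C]_n) \is unitarymx.
Proof. by apply/eqP; rewrite tr_perm_mx (map_perm_mx Num.conj) -perm_mxM mulgV perm_mx1. Qed.

Lemma lift0_ord2 : (lift ord0 ord0 : 'I_2) = ord_max. Proof. exact: val_inj. Qed.

Lemma mxtrace2 (X : 'M[C]_2) : \tr X = X ord0 ord0 + X ord_max ord_max.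
Proof. by rewrite /mxtrace !big_ord_recl big_ord0 addr0 lift0_ord2. Qed.

Lemma det_mx22 (X : 'M[C]_2) :
  \det X = X ord0 ord0 * X ord_max ord_max - X ord0 ord_max * X ord_max ord0.
Proof.
rewrite (expand_det_row _ ord0) !big_ord_recl big_ord0 addr0 /cofactor !det_mx11.
rewrite !mxE /= !lift0_ord2.
have -> : lift ord_max ord0 = ord0 :> 'I_2 by exact: val_inj.
by rewrite expr0 expr1 !mul1r mulN1r mulrN.
Qed.

Lemma roots_char_poly2 (X : 'M[C]_2) : exists r0 r1,
  [/\ roots_of (char_poly X) = [:: r0; r1], r0 + r1 = \tr X & r0 * r1 = \det X].
Proof.
rewrite /roots_of; case: closed_field_poly_normal => rs /= eX.
rewrite (monicP (char_poly_monic X)) scale1r in eX.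
have := size_char_poly X; rewrite eX size_prod_XsubC.
case: rs eX => [|r0 [|r1 []]] //= eX _; exists r0, r1; split => //.
  apply: oppr_inj; rewrite -(char_poly_trace X) // eX.
  rewrite !big_cons big_nil mulr1 coefMr !big_ord_recl big_ord0.
  by rewrite !coefB !coefX !coefC /=; ring.
have := char_poly_det X; rewrite sqrrN expr1n mul1r eX => <-.
rewrite !big_cons big_nil mulr1 coefMr big_ord_recl big_ord0.
by rewrite !coefB !coefX !coefC /=; ring.
Qed.

Lemma herm2_roots_real (X : 'M[C]_2) r0 r1 : X \is hermsymmx ->
  r0 + r1 = \tr X -> r0 * r1 = \det X -> r0 \is Num.real /\ r1 \is Num.real.
Proof.
move=> herm_X sum_r prod_r; have/hermsymmxP eX := herm_X.
have real_a := hermsymmx_diag_real ord0 herm_X.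
have real_d := hermsymmx_diag_real ord_max herm_X.
have disc : (r0 - r1) ^+ 2 =
    (X ord0 ord0 - X ord_max ord_max) ^+ 2 + 4%:R * `|X ord0 ord_max| ^+ 2.
  rewrite normCK -eX; transitivity ((r0 + r1) ^+ 2 - 4%:R * (r0 * r1)); first by ring.
  by rewrite sum_r prod_r mxtrace2 det_mx22; ring.
have real_diff : r0 - r1 \is Num.real.
  rewrite realEsqr disc addr_ge0 // -?realEsqr ?realB //.
  by rewrite mulr_ge0 ?ler0n ?exprn_ge0.
have real_sum : r0 + r1 \is Num.real by rewrite sum_r mxtrace2 realD.
have real_r0 : r0 \is Num.real.
  rewrite (_ : r0 = (r0 + r1 + (r0 - r1)) / 2%:R); last by field.
  by apply: realM; [exact: realD | rewrite realV realn].
by split => //; rewrite (_ : r1 = r0 + r1 - r0) ?realB //; ring.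
Qed.

Lemma spec_herm2 (X : 'M[C]_2) : X \is hermsymmx -> exists l0 l1,
  [/\ spec X = [:: l0; l1], l0 \is Num.real, l0 <= l1,
      l0 + l1 = \tr X & l0 * l1 = \det X].
Proof.
move=> herm_X; have [r0 [r1 [roots_X sum_r prod_r]]] := roots_char_poly2 X.
have [real_r0 real_r1] := herm2_roots_real herm_X sum_r prod_r.
rewrite /spec roots_X /sort /=; case: ifP => [le_r01 | not_le_r01].
  by exists r0, r1.
exists r1, r0; rewrite addrC mulrC; split => //.
by have := real_leVge real_r0 real_r1; rewrite not_le_r01.
Qed.

Lemma capacity_herm2 (X h : 'M[C]_2) : X \is hermsymmx ->
  capacity X h = (eig h 1 - eig h 0) * (max_eig X *+ 2 - \tr X).
Proof.
move=> /spec_herm2 [l0 [l1 [spec_X _ _ sum_l _]]].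
rewrite /capacity /max_eig /eig spec_X -sum_l !big_ord_recl big_ord0 lift0_ord2 /=; ring.
Qed.

Lemma max_eig_herm2_ge (X : 'M[C]_2) : X \is hermsymmx ->
  X ord0 ord0 <= max_eig X /\ X ord_max ord_max <= max_eig X.
Proof.
move=> herm_X; have /hermsymmxP eX := herm_X.
have [l0 [l1 [spec_X real_l0 le_l01 sum_l prod_l]]] := spec_herm2 herm_X.
rewrite /max_eig /eig spec_X /= -[_ <= l1]subr_le0 -[X ord_max ord_max <= l1]subr_le0.
have real_l1 : l1 \is Num.real by rewrite (ger_real le_l01).
have real_a1 := realB (hermsymmx_diag_real ord0 herm_X) real_l1.
have real_d1 := realB (hermsymmx_diag_real ord_max herm_X) real_l1.
(* the excesses a - l1 and d - l1 have product |b|^2 >= 0 and sum l0 - l1 <= 0 *)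
have prod_ge0 : 0 <= (X ord0 ord0 - l1) * (X ord_max ord_max - l1).
  rewrite (_ : _ * _ = `|X ord0 ord_max| ^+ 2) ?exprn_ge0 //.
  rewrite normCK -eX.
  transitivity (X ord0 ord0 * X ord_max ord_max - (l0 + l1) * l1 + l1 ^+ 2).
    by rewrite sum_l mxtrace2; ring.
  by rewrite mulrDl prod_l det_mx22; ring.
have sum_le0 : (X ord0 ord0 - l1) + (X ord_max ord_max - l1) <= 0.
  suff -> : (X ord0 ord0 - l1) + (X ord_max ord_max - l1) = l0 - l1 by rewrite subr_le0.
  have -> : l0 = \tr X - l1 by rewrite -sum_l addrK.
  by rewrite mxtrace2; ring.
split; first exact: le0_of_mul_ge0_add_le0 prod_ge0 sum_le0.
apply: (le0_of_mul_ge0_add_le0 (y := X ord0 ord0 - l1) real_d1).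
  by rewrite mulrC.
by rewrite addrC.
Qed.

Lemma max_eig_diag2 (X : 'M[C]_2) : X \is hermsymmx -> X ord0 ord_max = 0 ->
  max_eig X = X ord0 ord0 \/ max_eig X = X ord_max ord_max.
Proof.
move=> herm_X X01; have /hermsymmxP eX := herm_X.
have [l0 [l1 [spec_X _ _ sum_l prod_l]]] := spec_herm2 herm_X.
rewrite /max_eig /eig spec_X /=.
have : (l1 - X ord0 ord0) * (l1 - X ord_max ord_max) = 0.
  transitivity (l1 ^+ 2 - (l0 + l1) * l1 + l0 * l1); last by ring.
  by rewrite sum_l prod_l mxtrace2 det_mx22 X01; ring.
by move/eqP; rewrite mulf_eq0 !subr_eq0 => /orP [] /eqP; [left | right].
Qed.

Lemma idx2_eq (a b a' b' : 'I_2) : (idx2 a b == idx2 a' b') = (a == a') && (b == b').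
Proof.
have idx2_val (x y : 'I_2) : idx2 x y = (2 * x + y)%N :> nat.
  by rewrite inordK //; case: x y => [[|[]]] // ? [[|[]]].
apply/eqP/andP => [/(congr1 val) | [/eqP-> /eqP->] //].
rewrite /= !idx2_val; case: a b a' b' => [[|[]]] // ? [[|[]]] // ? [[|[]]] // ? [[|[]]] // ?.
Qed.

Lemma redAE (M : 'M[C]_4) a a' :
  redA M a a' = M (idx2 a ord0) (idx2 a' ord0) + M (idx2 a ord_max) (idx2 a' ord_max).
Proof. by rewrite mxE !big_ord_recl big_ord0 addr0 lift0_ord2. Qed.

Lemma redBE (M : 'M[C]_4) b b' :
  redB M b b' = M (idx2 ord0 b) (idx2 ord0 b') + M (idx2 ord_max b) (idx2 ord_max b').
Proof. by rewrite mxE !big_ord_recl big_ord0 addr0 lift0_ord2. Qed.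

Lemma dephaseE (M : 'M[C]_4) i j : dephase M i j = M i i *+ (i == j).
Proof. by rewrite !mxE. Qed.

Lemma redA_dephase (M : 'M[C]_4) a a' : redA (dephase M) a a' = redA M a a *+ (a == a').
Proof. by rewrite !redAE !dephaseE !idx2_eq eqxx !andbT mulrnDl. Qed.

Lemma redB_dephase (M : 'M[C]_4) b b' : redB (dephase M) b b' = redB M b b *+ (b == b').
Proof. by rewrite !redBE !dephaseE !idx2_eq eqxx /= mulrnDl. Qed.

Lemma redA_herm (M : 'M[C]_4) : M \is hermsymmx -> redA M \is hermsymmx.
Proof. by move/hermsymmxP=> eM; apply/hermsymmxP => a a'; rewrite !redAE raddfD /= -!eM. Qed.

Lemma redB_herm (M : 'M[C]_4) : M \is hermsymmx -> redB M \is hermsymmx.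
Proof. by move/hermsymmxP=> eM; apply/hermsymmxP => b b'; rewrite !redBE raddfD /= -!eM. Qed.

Lemma dephase_herm (M : 'M[C]_4) : M \is hermsymmx -> dephase M \is hermsymmx.
Proof.
move=> /hermsymmxP eM; apply/hermsymmxP => i j; rewrite !dephaseE eq_sym.
by case: eqP => [<- | _]; rewrite ?mulr1n -?eM // !mulr0n conjC0.
Qed.

Lemma enum_ord4 : enum 'I_4 =
  [:: idx2 ord0 ord0; idx2 ord0 ord_max; idx2 ord_max ord0; idx2 ord_max ord_max].
Proof.
rewrite !enum_ordSl enum_ord0.
by congr [:: _; _; _; _]; apply: val_inj; rewrite /= inordK.
Qed.

Lemma mxtrace4 (M : 'M[C]_4) : \tr M =
  M (idx2 ord0 ord0) (idx2 ord0 ord0) + M (idx2 ord0 ord_max) (idx2 ord0 ord_max) +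
  M (idx2 ord_max ord0) (idx2 ord_max ord0) + M (idx2 ord_max ord_max) (idx2 ord_max ord_max).
Proof.
have -> : \tr M = \sum_(i <- enum 'I_4) M i i by rewrite big_enum.
by rewrite enum_ord4 !big_cons big_nil addr0 !addrA.
Qed.

Lemma mxtrace_redA (M : 'M[C]_4) : \tr (redA M) = \tr M.
Proof. by rewrite mxtrace2 !redAE mxtrace4 !addrA. Qed.

Lemma mxtrace_redB (M : 'M[C]_4) : \tr (redB M) = \tr M.
Proof. by rewrite mxtrace2 !redBE mxtrace4; ring. Qed.

Lemma mxtrace_dephase (M : 'M[C]_4) : \tr (dephase M) = \tr M.
Proof. by rewrite !mxtrace4 !dephaseE !eqxx !mulr1n. Qed.

Definition marginal_max_eig (M : 'M[C]_4) : C := max_eig (redA M) + max_eig (redB M).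

Lemma Sub_ergE (h : 'M[C]_2) (M : 'M[C]_4) : M \is hermsymmx ->
  Sub_erg h h M = (eig h 1 - eig h 0) * ((marginal_max_eig M - \tr M) *+ 2).
Proof.
move=> herm_M; rewrite /Sub_erg !capacity_herm2 ?redA_herm ?redB_herm //.
by rewrite mxtrace_redA mxtrace_redB /marginal_max_eig; ring.
Qed.

Lemma ler_Sub_erg (h : 'M[C]_2) (M N : 'M[C]_4) : eig h 0 < eig h 1 ->
  M \is hermsymmx -> N \is hermsymmx -> \tr M = \tr N ->
  marginal_max_eig M <= marginal_max_eig N -> Sub_erg h h M <= Sub_erg h h N.
Proof.
move=> gap_h herm_M herm_N tr_MN le_MN; rewrite !Sub_ergE // tr_MN.
apply: ler_wpM2l; first by rewrite subr_ge0 ltW.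
by rewrite lerMn2r lerD2r le_MN orbT.
Qed.

Lemma ltr_Sub_erg (h : 'M[C]_2) (M N : 'M[C]_4) : eig h 0 < eig h 1 ->
  M \is hermsymmx -> N \is hermsymmx -> \tr M = \tr N ->
  marginal_max_eig M < marginal_max_eig N -> Sub_erg h h M < Sub_erg h h N.
Proof.
move=> gap_h herm_M herm_N tr_MN lt_MN; rewrite !Sub_ergE // tr_MN.
by rewrite ltr_pM2l ?subr_gt0 // ltrMn2r ltrD2r lt_MN.
Qed.

Lemma max_eig_diag2_le (X Y : 'M[C]_2) : X \is hermsymmx -> Y \is hermsymmx ->
  X ord0 ord_max = 0 -> X ord0 ord0 = Y ord0 ord0 -> X ord_max ord_max = Y ord_max ord_max ->
  max_eig X <= max_eig Y.
Proof.
move=> herm_X herm_Y X01 X00 X11; have [Y00_le Y11_le] := max_eig_herm2_ge herm_Y.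
by case: (max_eig_diag2 herm_X X01) => ->; rewrite ?X00 ?X11.
Qed.

Lemma marginal_max_eig_dephase_le (M : 'M[C]_4) : M \is hermsymmx ->
  marginal_max_eig (dephase M) <= marginal_max_eig M.
Proof.
move=> herm_M; apply: lerD; apply: max_eig_diag2_le;
  rewrite ?redA_herm ?redB_herm ?dephase_herm ?redA_dephase ?redB_dephase ?eqxx ?mulr1n //.
Qed.

Lemma marginal_max_eig_dephase_ge (M : 'M[C]_4) : M \is hermsymmx ->
  \tr M + (M (idx2 ord0 ord0) (idx2 ord0 ord0)
           - M (idx2 ord_max ord_max) (idx2 ord_max ord_max))
    <= marginal_max_eig (dephase M).
Proof.
move=> herm_M.
have [A00_le _] := max_eig_herm2_ge (redA_herm (dephase_herm herm_M)).
have [B00_le _] := max_eig_herm2_ge (redB_herm (dephase_herm herm_M)).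
rewrite redA_dephase redB_dephase !eqxx !mulr1n in A00_le B00_le.
suff -> : \tr M + (M (idx2 ord0 ord0) (idx2 ord0 ord0)
                  - M (idx2 ord_max ord_max) (idx2 ord_max ord_max))
    = redA M ord0 ord0 + redB M ord0 ord0 by exact: lerD.
by rewrite redAE redBE mxtrace4; ring.
Qed.

Lemma marginal_max_eig_dephase_spread (M : 'M[C]_4) (lo hi : C) : M \is hermsymmx ->
  (forall i, lo <= M i i <= hi) -> marginal_max_eig (dephase M) <= \tr M + (hi - lo).
Proof.
move=> herm_M M_bounds.
(* each of the four candidate values is tr M plus a difference of two diagonal entries *)
suff [i [j ->]] : exists i j, marginal_max_eig (dephase M) = \tr M + (M i i - M j j).
  by have /andP[_ Mi_le] := M_bounds i; have /andP[le_Mj _] := M_bounds j; rewrite lerD2l lerB.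
have herm_A := redA_herm (dephase_herm herm_M).
have herm_B := redB_herm (dephase_herm herm_M).
have A01 : redA (dephase M) ord0 ord_max = 0 by rewrite redA_dephase mulr0n.
have B01 : redB (dephase M) ord0 ord_max = 0 by rewrite redB_dephase mulr0n.
rewrite /marginal_max_eig.
case: (max_eig_diag2 herm_A A01) => ->; case: (max_eig_diag2 herm_B B01) => ->;
rewrite !redA_dephase !redB_dephase !eqxx !mulr1n !redAE !redBE mxtrace4.
- by exists (idx2 ord0 ord0), (idx2 ord_max ord_max); ring.
- by exists (idx2 ord0 ord_max), (idx2 ord_max ord0); ring.
- by exists (idx2 ord_max ord0), (idx2 ord0 ord_max); ring.
- by exists (idx2 ord_max ord_max), (idx2 ord0 ord0); ring.
Qed.
End QubitMatrices.

Theorem theorem2 (C : numClosedFieldType) (h : 'M[C]_2) :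
  h \is hermsymmx -> eig h 0 < eig h 1 ->
  forall rho : 'M[C]_4, density rho ->
  (* (i) *)
  (forall s : 'S_4,
     let P := (perm_mx s : 'M[C]_4) in
     let rho' := P *m rho *m dag P in
     [seq rho' i i | i <- enum 'I_4] =
       rev (sort (fun x y : C => x <= y) [seq rho i i | i <- enum 'I_4]) ->
     Sub_ic h h rho <= Sub_ic h h rho')
  /\
  (* (ii) *)
  (forall U : 'M[C]_4, U \is unitarymx ->
     let rhot := U *m rho *m dag U in
     max_eig (redA (dephase rhot)) + max_eig (redB (dephase rhot))
       > max_eig (redA rho) + max_eig (redB rho) ->
     Sub_erg h h rhot > Sub_erg h h rho).
Proof.
move=> _ gap_h rho [herm_rho _ _]; split=> [s P rho' diag_rho' | U unitary_U rhot lt_peak].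
  have unitary_P : P \is unitarymx by exact: perm_mx_unitary.
  have herm_rho' : rho' \is hermsymmx by exact: hermsymmx_congruence.
  have tr_rho' : \tr rho' = \tr rho by exact: mxtrace_unitary_conj.
  set lo := rho' (idx2 ord_max ord_max) (idx2 ord_max ord_max).
  set hi := rho' (idx2 ord0 ord0) (idx2 ord0 ord0).
  have rho_bounds i : lo <= rho i i <= hi.
    have real_diag : all [pred x : C | x \is Num.real] [seq rho i i | i <- enum 'I_4].
      by apply/allP => _ /mapP[j _ ->]; exact: hermsymmx_diag_real.
    have sorted_diag := sort_sorted_in (fun x y => @real_leVge C x y) real_diag.
    have mem_diag : rho i i \in sort (fun x y : C => x <= y) [seq rho i i | i <- enum 'I_4].
      by rewrite mem_sort (map_f (fun j => rho j j)) ?mem_enum.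
    move: sorted_diag mem_diag; rewrite -[sort _ _]revK -diag_rho' enum_ord4.
    exact: sorted4_bounds.
  apply: ler_Sub_erg; rewrite ?dephase_herm ?mxtrace_dephase //.
  apply: le_trans (marginal_max_eig_dephase_spread herm_rho rho_bounds) _.
  by rewrite -tr_rho' marginal_max_eig_dephase_ge.
have herm_rhot : rhot \is hermsymmx by exact: hermsymmx_congruence.
apply: ltr_Sub_erg; rewrite ?mxtrace_unitary_conj //.
exact: lt_le_trans lt_peak (marginal_max_eig_dephase_le herm_rhot).
Qed.
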